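(* The class of cyclic groups of prime power order is $\log$-compressible via $\Sigma_3$-sentences in the language of monoids $L(e,\circ)$: there is a constant $c$ such that every cyclic group $G$ with $|G|=p^k$ ($p$ prime, $k\ge1$) is described by a $\Sigma_3$-sentence $\phi$ of the language of monoids with $|\phi|\le c\log|G|$.
   Context: A sentence $\phi$ describes a structure $G$ if $G$ is, up to isomorphism, the unique model of $\phi$. The length $|\phi|$ of a formula is its number of symbols, each variable counting as a single symbol. A $\Sigma_r$-sentence is a sentence in prenex normal form whose quantifier prefix starts with an existential quantifier and has $r-1$ quantifier alternations. Here $\log m=\min\{r\in\mathbb N: 2^r\ge m\}$. *)

From mathcomp Require Import all_boot all_fingroup all_solvable.
Set Implicit Arguments. Unset Strict Implicit. Unset Printing Implicit Defensive.

Inductive term : Type :=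
| TVar : nat -> term
| TE : term
| TOp : term -> term -> term.

Inductive formula : Type :=
| FEq : term -> term -> formula
| FNot : formula -> formula
| FAnd : formula -> formula -> formula
| FOr : formula -> formula -> formula
| FImp : formula -> formula -> formula
| FEx : nat -> formula -> formula
| FAll : nat -> formula -> formula.

(* Length = number of symbols; each variable counts as one symbol.
   Parentheses and connectives are counted as symbols. *)
Fixpoint tsize (t : term) : nat :=
  match t with
  | TVar _ => 1
  | TE => 1
  | TOp a b => tsize a + tsize b + 3      (* "(", "o", ")" *)
  end.

Fixpoint fsize (f : formula) : nat :=
  match f with
  | FEq a b => tsize a + tsize b + 1
  | FNot g => fsize g + 1
  | FAnd g h | FOr g h | FImp g h => fsize g + fsize h + 3
  | FEx _ g | FAll _ g => fsize g + 2      (* quantifier + variable *)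
  end.

Fixpoint tvars (t : term) : seq nat :=
  match t with
  | TVar n => [:: n]
  | TE => [::]
  | TOp a b => tvars a ++ tvars b
  end.

Fixpoint free_vars (f : formula) : seq nat :=
  match f with
  | FEq a b => tvars a ++ tvars b
  | FNot g => free_vars g
  | FAnd g h | FOr g h | FImp g h => free_vars g ++ free_vars h
  | FEx x g | FAll x g => filter (fun y => y != x) (free_vars g)
  end.

Definition sentence (f : formula) : Prop := free_vars f = [::].

Fixpoint qfree (f : formula) : bool :=
  match f with
  | FEq _ _ => true
  | FNot g => qfree g
  | FAnd g h | FOr g h | FImp g h => qfree g && qfree h
  | FEx _ _ | FAll _ _ => false
  end.

(* Prenex formulas whose quantifier prefix consists of exactly r blocks,
   starting with an existential (ExBlocks) resp. universal (AllBlocks) block. *)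
Inductive ExBlocks : nat -> formula -> Prop :=
| ExB_qf : forall x g, qfree g -> ExBlocks 1 (FEx x g)
| ExB_ex : forall r x g, ExBlocks r g -> ExBlocks r (FEx x g)
| ExB_all : forall r x g, AllBlocks r g -> ExBlocks r.+1 (FEx x g)
with AllBlocks : nat -> formula -> Prop :=
| AllB_qf : forall x g, qfree g -> AllBlocks 1 (FAll x g)
| AllB_all : forall r x g, AllBlocks r g -> AllBlocks r (FAll x g)
| AllB_ex : forall r x g, ExBlocks r g -> AllBlocks r.+1 (FAll x g).

Definition Sigma (r : nat) (f : formula) : Prop := ExBlocks r f.

Definition upd {M : Type} (v : nat -> M) (x : nat) (a : M) : nat -> M :=
  fun y => if y == x then a else v y.

Fixpoint teval {M : Type} (e : M) (op : M -> M -> M) (v : nat -> M) (t : term) : M :=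
  match t with
  | TVar n => v n
  | TE => e
  | TOp a b => op (teval e op v a) (teval e op v b)
  end.

Fixpoint sat {M : Type} (e : M) (op : M -> M -> M) (v : nat -> M) (f : formula) : Prop :=
  match f with
  | FEq a b => teval e op v a = teval e op v b
  | FNot g => ~ sat e op v g
  | FAnd g h => sat e op v g /\ sat e op v h
  | FOr g h => sat e op v g \/ sat e op v h
  | FImp g h => sat e op v g -> sat e op v h
  | FEx x g => exists a : M, sat e op (upd v x a) g
  | FAll x g => forall a : M, sat e op (upd v x a) g
  end.

Definition models {M : Type} (e : M) (op : M -> M -> M) (f : formula) : Prop :=
  forall v : nat -> M, sat e op v f.

Definition isomorphic {M N : Type} (e : M) (op : M -> M -> M)
  (e' : N) (op' : N -> N -> N) : Prop :=
  exists h : M -> N, bijective h /\ h e = e' /\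
    forall x y, h (op x y) = op' (h x) (h y).

Definition describes {M : Type} (e : M) (op : M -> M -> M) (f : formula) : Prop :=
  models e op f /\
  forall (N : Type) (e' : N) (op' : N -> N -> N),
    models e' op' f -> isomorphic e' op' e op.

Definition gcarrier {gT : finGroupType} (G : {group gT}) : Type :=
  {x : gT | x \in G}.

Definition gunit {gT : finGroupType} (G : {group gT}) : gcarrier G :=
  exist _ 1%g (group1 G).

Definition gmul {gT : finGroupType} (G : {group gT}) (x y : gcarrier G) : gcarrier G :=
  exist _ (proj1_sig x * proj1_sig y)%g (groupM (proj2_sig x) (proj2_sig y)).

(* log m = min { r : 2^r >= m }, which is mathcomp's up_log 2 m. *)
Definition log2up (m : nat) : nat := up_log 2 m.

From Pilot Require Import Defs.
From mathcomp Require Import all_boot all_fingroup all_solvable.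
From mathcomp Require Import zify.
From Stdlib Require Import FunctionalExtensionality ClassicalEpsilon.
Set Implicit Arguments. Unset Strict Implicit. Unset Printing Implicit Defensive.

(* A cyclic group of order n = p^k is, as a monoid, generated by an element g
   with g^n = e <> g^(p^(k-1)); conversely, in any monoid generated by such a g
   the exponents i with g^i = e are closed under gcd, hence are exactly the
   multiples of n, and the monoid is cyclic of order n.  The Sigma_3 sentence
   expresses this with R = log n + 1 variables x_j guessed to be g^(2^j) (each
   the square of the previous one): a universal block of three variables z
   asserts associativity and neutrality of e at z and writes z as a product of
   a subfamily of the x_j (its binary expansion, guessed in an inner
   existential block), while g^n and g^(p^(k-1)) are written directly as such
   binary products.  Every part of the sentence has O(R) symbols. *)

Definition mpow {M : Type} (e : M) (op : M -> M -> M) (g : M) (i : nat) : M :=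
  iter i (op g) e.

Definition generated_by {M : Type} (e : M) (op : M -> M -> M) (g : M) : Prop :=
  forall x, exists i, x = mpow e op g i.

Definition cyclic_generator {M : Type} (e : M) (op : M -> M -> M) (g : M) (n : nat) :=
  generated_by e op g /\
  forall i j, mpow e op g i = mpow e op g j <-> i = j %[mod n].

Section MonoidPowers.
Variables (M : Type) (e : M) (op : M -> M -> M).
Hypothesis opA : forall x y z, op x (op y z) = op (op x y) z.
Hypothesis op1 : forall x, op e x = x.
Variable g : M.
Local Notation pw := (mpow e op g).

Lemma mpowD i j : pw (i + j) = op (pw i) (pw j).
Proof. by elim: i => [|i IH]; rewrite ?op1 // addSn /mpow !iterS -/(pw _) IH opA. Qed.

Lemma mpow_sum I (r : seq I) (P : pred I) (d : I -> nat) :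
  pw (\sum_(i <- r | P i) d i) = \big[op/e]_(i <- r | P i) pw (d i).
Proof. exact: (big_morph pw mpowD). Qed.

Lemma mpow_mul_eq1 n q : pw n = e -> pw (q * n) = e.
Proof. by move=> Hn; elim: q => [|q IH] //; rewrite mulSn mpowD Hn IH op1. Qed.

Lemma mpow_modn n i : pw n = e -> pw i = pw (i %% n).
Proof. by move=> Hn; rewrite {1}(divn_eq i n) mpowD mpow_mul_eq1 // op1. Qed.

Lemma mpow_gcd_eq1 a b : pw a = e -> pw b = e -> pw (gcdn a b) = e.
Proof.
elim/ltn_ind: a b => a IH b Ha Hb; rewrite gcdnE.
case: eqP => [//|/eqP a_neq0].
by apply: IH; rewrite ?ltn_pmod ?lt0n // -(mpow_modn b Ha).
Qed.

Lemma mpow_eq1_ppow p k i :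
  prime p -> 0 < k -> pw (p ^ k) = e -> pw (p ^ k.-1) <> e ->
  pw i = e <-> p ^ k %| i.
Proof.
move=> p_pr k_gt0 Hpk Hpk1; split=> [Hi|/dvdnP [q ->]]; last exact: mpow_mul_eq1.
have /(dvdn_pfactor _ _ p_pr) [t t_le_k Et] := dvdn_gcdr i (p ^ k).
have Hpt : pw (p ^ t) = e by rewrite -Et mpow_gcd_eq1.
have [t_lt_k | k_le_t] := ltnP t k.
  case: Hpk1; have /dvdnP [q ->] : p ^ t %| p ^ k.-1 by rewrite dvdn_exp2l; lia.
  exact: mpow_mul_eq1.
have -> : k = t by lia.
by rewrite -Et dvdn_gcdl.
Qed.

Lemma mpow_eq_mod n i j :
  0 < n -> (forall k, pw k = e <-> n %| k) -> pw i = pw j <-> i = j %[mod n].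
Proof.
move=> n_gt0 period; have Hn : pw n = e by apply/period.
split=> [Eij|Eij]; last by rewrite (mpow_modn i Hn) Eij -mpow_modn.
(* g^(n j - j) acts as an inverse of g^j. *)
have Hj : j + (n * j - j) = n * j by rewrite subnKC // leq_pmull.
have /period : pw (i + (n * j - j)) = e.
  by rewrite mpowD Eij -mpowD Hj mulnC mpow_mul_eq1.
have : n %| j + (n * j - j) by rewrite Hj dvdn_mulr.
rewrite /dvdn => /eqP Ej /eqP Ei; apply/eqP.
by rewrite -(eqn_modDr (n * j - j)) Ei Ej.
Qed.

End MonoidPowers.

Lemma cyclic_generatorP (M : Type) (e : M) (op : M -> M -> M) g p k :
  (forall x y z, op x (op y z) = op (op x y) z) -> (forall x, op e x = x) ->
  prime p -> 0 < k ->
  cyclic_generator e op g (p ^ k) <->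
  [/\ generated_by e op g, mpow e op g (p ^ k) = e & mpow e op g (p ^ k.-1) <> e].
Proof.
move=> opA op1 p_pr k_gt0; have pk_gt0 : 0 < p ^ k by rewrite expn_gt0 prime_gt0.
split=> [[gen period] | [gen Hpk Hpk1]].
  split=> //; first by apply: (period (p ^ k) 0).2; rewrite modnn mod0n.
  move/(period _ 0).1; rewrite mod0n modn_small; last by rewrite ltn_exp2l ?prime_gt1; lia.
  by apply/eqP; rewrite -lt0n expn_gt0 prime_gt0.
split=> // i j; apply: mpow_eq_mod => // {}i.
exact: mpow_eq1_ppow.
Qed.

Lemma cyclic_generator_isomorphic (M : Type) (e : M) (op : M -> M -> M)
    (N : Type) (e' : N) (op' : N -> N -> N) g h n :
  (forall x y z, op x (op y z) = op (op x y) z) -> (forall x, op e x = x) ->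
  (forall x y z, op' x (op' y z) = op' (op' x y) z) -> (forall x, op' e' x = x) ->
  cyclic_generator e op g n -> cyclic_generator e' op' h n -> isomorphic e op e' op'.
Proof.
move=> opA op1 opA' op1' [gen_g period_g] [gen_h period_h].
pose lg x := proj1_sig (constructive_indefinite_description _ (gen_g x)).
pose lh y := proj1_sig (constructive_indefinite_description _ (gen_h y)).
have lgK x : mpow e op g (lg x) = x.
  by rewrite /lg; case: constructive_indefinite_description.
have lhK y : mpow e' op' h (lh y) = y.
  by rewrite /lh; case: constructive_indefinite_description.
exists (fun x => mpow e' op' h (lg x)); split; last split.
- exists (fun y => mpow e op g (lh y)) => [x | y].
    by rewrite -[RHS]lgK; apply/period_g/period_h; rewrite lhK.
  by rewrite -[RHS]lhK; apply/period_h/period_g; rewrite lgK.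
- by apply/(period_h _ 0)/(period_g _ 0); rewrite lgK.
- move=> x y; rewrite -mpowD //; apply/period_h/period_g.
  by rewrite mpowD // !lgK.
Qed.

Lemma sum_bits m c : m < 2 ^ c -> \sum_(i < c) odd (m %/ 2 ^ i) * 2 ^ i = m.
Proof.
elim: c m => [|c IH] m m_lt; first by rewrite big_ord0; move: m_lt; rewrite expn0; lia.
rewrite big_ord_recl expn0 divn1 muln1.
rewrite (eq_bigr (fun i : 'I_c => odd (m./2 %/ 2 ^ i) * 2 ^ i * 2)) => [|i _]; last first.
  by rewrite /= expnS divnMA divn2 [2 * _]mulnC mulnA.
rewrite -(big_distrl 2) /= IH; last by move: m_lt; rewrite expnS -divn2; lia.
by rewrite muln2 odd_double_half.
Qed.

Fixpoint FExs (a c : nat) (f : formula) : formula :=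
  if c is c'.+1 then FEx a (FExs a.+1 c' f) else f.

Fixpoint FAlls (a c : nat) (f : formula) : formula :=
  if c is c'.+1 then FAll a (FAlls a.+1 c' f) else f.

Fixpoint FAnds (F : nat -> formula) (c : nat) : formula :=
  if c is c'.+1 then FAnd (F 0) (FAnds (fun i => F i.+1) c') else FEq TE TE.

Fixpoint TProd (F : nat -> term) (c : nat) : term :=
  if c is c'.+1 then TOp (F 0) (TProd (fun i => F i.+1) c') else TE.

(* Denotes g^m when each variable i < c denotes g^(2^i) and m < 2^c. *)
Definition TBits (m c : nat) : term :=
  TProd (fun i => if odd (m %/ 2 ^ i) then TVar i else TE) c.

Definition upd_block {M : Type} (v : nat -> M) (a c : nat) (xs : nat -> M) : nat -> M :=
  fun y => if (a <= y) && (y < a + c) then xs (y - a) else v y.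

Section Semantics.
Variables (M : Type) (e : M) (op : M -> M -> M).

Lemma upd_block0 (v xs : nat -> M) a : upd_block v a 0 xs = v.
Proof. by apply: functional_extensionality => y; rewrite /upd_block; case: ifP => //; lia. Qed.

Lemma upd_blockS (v xs : nat -> M) a c x :
  upd_block (upd v a x) a.+1 c xs =
  upd_block v a c.+1 (fun i => if i is i'.+1 then xs i' else x).
Proof.
apply: functional_extensionality => y; rewrite /upd_block /upd.
have [->|ya] := eqVneq y a; first by rewrite ltnn leqnn subnn addnS ltnS leq_addr.
case: ifP => Hy; last by rewrite ifF //; lia.
by rewrite ifT; [have -> : y - a = (y - a.+1).+1 by lia | lia].
Qed.

Lemma sat_FExs v a c f :
  sat e op v (FExs a c f) <-> exists xs, sat e op (upd_block v a c xs) f.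
Proof.
elim: c a v => [|c IH] a v /=.
  by split=> [H | [xs]]; [exists v | ]; rewrite upd_block0.
split=> [[x /IH [xs H]] | [xs H]].
  by exists (fun i => if i is i'.+1 then xs i' else x); rewrite -upd_blockS.
exists (xs 0); apply/IH; exists (fun i => xs i.+1); rewrite upd_blockS.
by have -> : (fun i => if i is i'.+1 then xs i'.+1 else xs 0) = xs
  by apply: functional_extensionality => -[].
Qed.

Lemma sat_FAlls v a c f :
  sat e op v (FAlls a c f) <-> forall xs, sat e op (upd_block v a c xs) f.
Proof.
elim: c a v => [|c IH] a v /=.
  by split=> [H xs | H]; [| have := H v]; rewrite upd_block0.
split=> [H xs | H x]; last by apply/IH => xs; rewrite upd_blockS.
have /IH := H (xs 0); move/(_ (fun i => xs i.+1)); rewrite upd_blockS.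
by have -> : (fun i => if i is i'.+1 then xs i'.+1 else xs 0) = xs
  by apply: functional_extensionality => -[].
Qed.

Lemma sat_FAnds v F c : sat e op v (FAnds F c) <-> forall i, i < c -> sat e op v (F i).
Proof.
elim: c F => [|c IH] F /=; first by split.
rewrite IH; split=> [[H0 HS] [|i] Hi // | H]; first exact: HS.
by split=> [|i Hi]; apply: H.
Qed.

Lemma teval_TProd v F c :
  teval e op v (TProd F c) = \big[op/e]_(i < c) teval e op v (F i).
Proof. by elim: c F => [|c IH] F /=; rewrite ?big_ord0 // big_ord_recl IH. Qed.

End Semantics.

Lemma free_vars_FExs y a c f :
  y \in free_vars (FExs a c f) -> (y \in free_vars f) && ~~ (a <= y < a + c).
Proof.
elim: c a => [|c IH] a /=; first by move=> ->; lia.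
by rewrite mem_filter => /andP [ya /IH /andP [-> H]]; move: ya H; lia.
Qed.

Lemma free_vars_FAlls y a c f :
  y \in free_vars (FAlls a c f) -> (y \in free_vars f) && ~~ (a <= y < a + c).
Proof.
elim: c a => [|c IH] a /=; first by move=> ->; lia.
by rewrite mem_filter => /andP [ya /IH /andP [-> H]]; move: ya H; lia.
Qed.

Lemma all_free_vars_FAnds (P : pred nat) F c :
  (forall i, i < c -> all P (free_vars (F i))) -> all P (free_vars (FAnds F c)).
Proof.
elim: c F => [|c IH] F //= HF; rewrite all_cat HF // IH // => i Hi.
exact: HF.
Qed.

Lemma all_tvars_TProd (P : pred nat) F c :
  (forall i, i < c -> all P (tvars (F i))) -> all P (tvars (TProd F c)).
Proof.
elim: c F => [|c IH] F //= HF; rewrite all_cat HF // IH // => i Hi.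
exact: HF.
Qed.

Lemma qfree_FAnds F c : (forall i, qfree (F i)) -> qfree (FAnds F c).
Proof. by move=> HF; elim: c F HF => [|c IH] F HF //=; rewrite HF IH. Qed.

Lemma FExs_Sigma1 a c f : 0 < c -> qfree f -> ExBlocks 1 (FExs a c f).
Proof.
elim: c a => [|[|c] IH] a // _ Hf /=; first by constructor.
by apply: ExB_ex; apply: IH.
Qed.

Lemma FExs_ExBlocks r a c f : 0 < c -> AllBlocks r f -> ExBlocks r.+1 (FExs a c f).
Proof.
elim: c a => [|[|c] IH] a // _ Hf /=; first by constructor.
by apply: ExB_ex; apply: IH.
Qed.

Lemma FAlls_AllBlocks r a c f : 0 < c -> ExBlocks r f -> AllBlocks r.+1 (FAlls a c f).
Proof.
elim: c a => [|[|c] IH] a // _ Hf /=; first by constructor.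
by apply: AllB_all; apply: IH.
Qed.

Lemma fsize_FExs a c f : fsize (FExs a c f) = fsize f + 2 * c.
Proof. by elim: c a => [|c IH] a /=; rewrite ?IH; lia. Qed.

Lemma fsize_FAlls a c f : fsize (FAlls a c f) = fsize f + 2 * c.
Proof. by elim: c a => [|c IH] a /=; rewrite ?IH; lia. Qed.

Lemma fsize_FAnds F c s : (forall i, fsize (F i) = s) -> fsize (FAnds F c) = (s + 3) * c + 3.
Proof. by elim: c F => [|c IH] F HF /=; rewrite ?IH ?HF //; lia. Qed.

Lemma tsize_TProd F c : (forall i, Defs.tsize (F i) = 1) -> Defs.tsize (TProd F c) = 4 * c + 1.
Proof. by elim: c F => [|c IH] F HF /=; rewrite ?IH ?HF //; lia. Qed.

Section CyclicSentence.
Variables R n m : nat.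

(* Variables 0 .. R-1 hold g^(2^j), variables R, R+1, R+2 are universally
   quantified, and R+3 .. 2R+2 hold the factors of the binary expansion of the
   element in variable R. *)
Definition cyclic_matrix : formula :=
  let x j := TVar j in let z i := TVar (R + i) in let y j := TVar (R.+3 + j) in
  FAnd (FAnds (fun j => FEq (x j.+1) (TOp (x j) (x j))) R.-1)
  (FAnd (FEq (TOp (z 0) (TOp (z 1) (z 2))) (TOp (TOp (z 0) (z 1)) (z 2)))
  (FAnd (FAnd (FEq (TOp TE (z 0)) (z 0)) (FEq (TOp (z 0) TE) (z 0)))
  (FAnd (FAnds (fun j => FOr (FEq (y j) TE) (FEq (y j) (x j))) R)
  (FAnd (FEq (z 0) (TProd y R))
  (FAnd (FEq (TBits n R) TE) (FNot (FEq (TBits m R) TE))))))).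

Definition cyclic_sentence : formula :=
  FExs 0 R (FAlls R 3 (FExs R.+3 R cyclic_matrix)).

Lemma free_vars_cyclic_matrix : all (fun y => y < R.+3 + R) (free_vars cyclic_matrix).
Proof.
rewrite /cyclic_matrix /TBits /=; repeat rewrite all_cat /=.
repeat (apply/andP; split).
all: try lia.
- by apply: all_free_vars_FAnds => i Hi /=; lia.
- by apply: all_free_vars_FAnds => i Hi /=; lia.
all: apply: all_tvars_TProd => i Hi /=; try case: ifP => _ /=; lia.
Qed.

Lemma cyclic_sentence_closed : sentence cyclic_sentence.
Proof.
rewrite /sentence; case E: (free_vars _) => [//|y s].
have : y \in free_vars cyclic_sentence by rewrite E mem_head.
case/free_vars_FExs/andP => /free_vars_FAlls/andP [/free_vars_FExs/andP [y_in ?] ?] ?.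
by have := allP free_vars_cyclic_matrix y y_in; lia.
Qed.

Lemma cyclic_sentence_Sigma3 : 0 < R -> Sigma 3 cyclic_sentence.
Proof.
move=> R_gt0; apply: FExs_ExBlocks => //; apply: FAlls_AllBlocks => //.
by apply: FExs_Sigma1 => //=; rewrite !qfree_FAnds.
Qed.

Lemma fsize_cyclic_sentence : 0 < R -> fsize cyclic_sentence = 38 * R + 66.
Proof.
move=> R_gt0; rewrite /cyclic_sentence !(fsize_FExs, fsize_FAlls) /=.
rewrite (@fsize_FAnds _ _ 7) // (@fsize_FAnds _ _ 9) //.
rewrite !tsize_TProd => [|i|i|i] //; try by case: ifP.
lia.
Qed.

End CyclicSentence.

Section CyclicSentenceSemantics.
Variables (M : Type) (e : M) (op : M -> M -> M) (R n m : nat).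

Definition bits_prod (xs : nat -> M) (k : nat) : M :=
  \big[op/e]_(j < R) (if odd (k %/ 2 ^ j) then xs j else e).

Definition cyclic_conditions (xs zs ys : nat -> M) : Prop :=
  [/\ forall j, j.+1 < R -> xs j.+1 = op (xs j) (xs j),
      op (zs 0) (op (zs 1) (zs 2)) = op (op (zs 0) (zs 1)) (zs 2),
      op e (zs 0) = zs 0 /\ op (zs 0) e = zs 0,
      forall j, j < R -> ys j = e \/ ys j = xs j &
      [/\ zs 0 = \big[op/e]_(j < R) ys j, bits_prod xs n = e & bits_prod xs m <> e]].

Lemma sat_cyclic_matrix v xs zs ys :
  let w := upd_block (upd_block (upd_block v 0 R xs) R 3 zs) R.+3 R ys in
  sat e op w (cyclic_matrix R n m) <-> cyclic_conditions xs zs ys.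
Proof.
move=> w.
have wx j : j < R -> w j = xs j.
  by move=> ?; rewrite /w /upd_block; do 3 (case: ifP => ?; try lia); rewrite subn0.
have wz i : i < 3 -> w (R + i) = zs i.
  by move=> ?; rewrite /w /upd_block; do 2 (case: ifP => ?; try lia); rewrite addKn.
have wy j : j < R -> w (R.+3 + j) = ys j.
  by move=> ?; rewrite /w /upd_block; case: ifP => ?; rewrite ?addKn //; lia.
have bitsE k : teval e op w (TBits k R) = bits_prod xs k.
  by rewrite teval_TProd; apply: eq_bigr => j _; case: ifP => //= _; rewrite wx.
have prodE : teval e op w (TProd (fun j => TVar (R.+3 + j)) R) = \big[op/e]_(j < R) ys j.
  by rewrite teval_TProd; apply: eq_bigr => j _; rewrite /= wy.
have doublingE : (forall j, j < R.-1 -> w j.+1 = op (w j) (w j)) <->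
                 (forall j, j.+1 < R -> xs j.+1 = op (xs j) (xs j)).
  split=> H j jR.
    by rewrite -(wx j.+1) // -(wx j); [apply: H | ]; lia.
  by rewrite !wx; [apply: H | ..]; lia.
have digitsE : (forall j, j < R -> w (R.+3 + j) = e \/ w (R.+3 + j) = w j) <->
               (forall j, j < R -> ys j = e \/ ys j = xs j).
  by split=> H j jR; have := H j jR; rewrite wy // wx.
rewrite /cyclic_matrix /= !sat_FAnds /= bitsE bitsE prodE !wz // doublingE digitsE.
by split=> [[? [? [? [? [? [? ?]]]]]] | [? ? ? ? [? ? ?]]].
Qed.

Lemma sat_cyclic_sentence v :
  sat e op v (cyclic_sentence R n m) <->
  exists xs, forall zs, exists ys, cyclic_conditions xs zs ys.
Proof.
rewrite /cyclic_sentence sat_FExs; split=> -[xs H]; exists xs.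
  move=> zs; have /sat_FAlls/(_ zs)/sat_FExs [ys /sat_cyclic_matrix] := H.
  by exists ys.
apply/sat_FAlls => zs; apply/sat_FExs; have [ys ?] := H zs.
by exists ys; apply/sat_cyclic_matrix.
Qed.

End CyclicSentenceSemantics.

Section Soundness.
Variables (M : Type) (e : M) (op : M -> M -> M).
Hypothesis opA : forall x y z, op x (op y z) = op (op x y) z.
Hypothesis op1 : forall x, op e x = x.
Hypothesis opr1 : forall x, op x e = x.
Variable g : M.
Local Notation pw := (mpow e op g).

Lemma bits_prod_mpow R k : k < 2 ^ R -> bits_prod e op R (fun j => pw (2 ^ j)) k = pw k.
Proof.
move=> k_lt; rewrite /bits_prod -{2}(sum_bits k_lt) (mpow_sum opA op1).
by apply: eq_bigr => j _; case: odd; rewrite ?mul1n.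
Qed.

Lemma cyclic_sentence_sound R n m :
  generated_by e op g -> 0 < n -> n < 2 ^ R -> m < 2 ^ R -> pw n = e -> pw m <> e ->
  models e op (cyclic_sentence R n m).
Proof.
move=> gen n_gt0 n_lt m_lt gn gm v; apply/sat_cyclic_sentence.
exists (fun j => pw (2 ^ j)) => zs.
have [s Es] := gen (zs 0); rewrite (mpow_modn opA op1 _ gn) in Es.
have s_lt : s %% n < 2 ^ R by apply: ltn_trans n_lt; rewrite ltn_pmod.
exists (fun j => if odd (s %% n %/ 2 ^ j) then pw (2 ^ j) else e); split=> //.
- by move=> j _; rewrite -mpowD // expnS mul2n addnn.
- by move=> j _; case: odd; [right | left].
- by split; rewrite ?bits_prod_mpow // Es -(bits_prod_mpow s_lt).
Qed.

End Soundness.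

Section Completeness.
Variables (M : Type) (e : M) (op : M -> M -> M) (R n m : nat).
Hypotheses (n_lt : n < 2 ^ R) (m_lt : m < 2 ^ R).
Hypothesis sentence_holds : models e op (cyclic_sentence R n m).

Let witness : exists xs, forall zs, exists ys, cyclic_conditions e op R n m xs zs ys.
Proof. exact/(sat_cyclic_sentence _ _ _ _ _ (fun=> e)). Qed.

Lemma cyclic_sentence_monoid :
  [/\ forall x y z, op x (op y z) = op (op x y) z,
      forall x, op e x = x & forall x, op x e = x].
Proof.
have [xs H] := witness.
pose zs (x y z : M) i := if i is 1 then y else if i is 2 then z else x.
split=> [x y z | x | x].
- by have [ys [_ ? _ _ _]] := H (zs x y z).
- by have [ys [_ _ [? _] _ _]] := H (zs x x x).
- by have [ys [_ _ [_ ?] _ _]] := H (zs x x x).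
Qed.

Lemma cyclic_sentence_generator :
  exists g, [/\ generated_by e op g, mpow e op g n = e & mpow e op g m <> e].
Proof.
have [opA op1 opr1] := cyclic_sentence_monoid; have [xs H] := witness.
have [_ [doubling _ _ _ [_ gn gm]]] := H (fun _ => e).
have xsE j : j < R -> xs j = mpow e op (xs 0) (2 ^ j).
  elim: j => [_ | j IH jR]; first by rewrite /mpow /= opr1.
  rewrite doubling // IH; last exact: ltnW.
  by rewrite -mpowD // expnS mul2n addnn.
have bitsE k : k < 2 ^ R -> bits_prod e op R xs k = mpow e op (xs 0) k.
  move=> k_lt; rewrite -(bits_prod_mpow opA op1 _ k_lt) /bits_prod.
  by apply: eq_bigr => j _; rewrite xsE.
exists (xs 0); split; rewrite -?bitsE // => x.
have [ys [_ _ _ digits [-> _ _]]] := H (fun _ => x).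
apply: (big_ind (fun y => exists i, y = mpow e op (xs 0) i)) => [|_ _ [i ->] [j ->] | j _].
- by exists 0.
- by exists (i + j); rewrite mpowD.
- by case: (digits j (ltn_ord j)) => ->; [exists 0 | exists (2 ^ j); apply: xsE].
Qed.

End Completeness.

Section GroupCarrier.
Variables (gT : finGroupType) (G : {group gT}).

Lemma gmulA (x y z : gcarrier G) : gmul x (gmul y z) = gmul (gmul x y) z.
Proof. by apply: val_inj; rewrite /= mulgA. Qed.

Lemma gmul1 (x : gcarrier G) : gmul (gunit G) x = x.
Proof. by apply: val_inj; rewrite /= mul1g. Qed.

Lemma gmulr1 (x : gcarrier G) : gmul x (gunit G) = x.
Proof. by apply: val_inj; rewrite /= mulg1. Qed.

Lemma val_mpow (x : gcarrier G) i : val (mpow (gunit G) (@gmul gT G) x i) = (val x ^+ i)%g.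
Proof. by elim: i => [|i IH] //; rewrite /mpow iterS -/(mpow _ _ _ _) /= IH expgS. Qed.

Lemma gcarrier_cyclic_generator (x : gcarrier G) :
  G :=: <[val x]>%g -> cyclic_generator (gunit G) (@gmul gT G) x #[val x]%g.
Proof.
move=> defG; split=> [[y Gy] | i j].
  have /cycleP [i Ey] : y \in <[val x]>%g by rewrite -defG.
  by exists i; apply: val_inj; rewrite val_mpow.
split=> Eij; first by apply/eqP; rewrite -eq_expg_mod_order -!val_mpow Eij.
by apply: val_inj; rewrite !val_mpow; apply/eqP; rewrite eq_expg_mod_order Eij.
Qed.

End GroupCarrier.

Theorem proposition2p2 :
  exists c : nat,
    forall (p k : nat) (gT : finGroupType) (G : {group gT}),
      prime p -> 0 < k -> cyclic G -> #|G| = p ^ k ->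
      exists phi : formula,
        sentence phi /\ Sigma 3 phi /\ describes (gunit G) (@gmul gT G) phi /\
        fsize phi <= c * log2up #|G|.
Proof.
exists 142 => p k gT G p_pr k_gt0 /cyclicP [a defG] cardG.
have Ga : a \in G by rewrite defG cycle_id.
pose g : gcarrier G := exist _ a Ga.
have genG : cyclic_generator (gunit G) (@gmul gT G) g (p ^ k).
  by rewrite -cardG defG; apply: gcarrier_cyclic_generator.
have [gen gn gm] := (cyclic_generatorP g (@gmulA _ G) (@gmul1 _ G) p_pr k_gt0).1 genG.
have pk_gt1 : 1 < p ^ k by rewrite -{1}(expn0 p) ltn_exp2l ?prime_gt1.
have log_gt0 : 0 < log2up #|G| by rewrite up_log_gt0 cardG pk_gt1.
set R := (log2up #|G|).+1.
have pk_lt : p ^ k < 2 ^ R.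
  by rewrite -cardG (leq_ltn_trans (up_logP _ (isT : 1 < 2))) // ltn_exp2l.
have pk1_lt : p ^ k.-1 < 2 ^ R.
  by apply: leq_ltn_trans pk_lt; rewrite leq_exp2l ?prime_gt1 //; lia.
exists (cyclic_sentence R (p ^ k) (p ^ k.-1)); split; [|split; [|split]].
- exact: cyclic_sentence_closed.
- exact: cyclic_sentence_Sigma3.
- split.
    apply: (cyclic_sentence_sound (@gmulA _ G) (@gmul1 _ G) (@gmulr1 _ G) gen) => //.
    by rewrite expn_gt0 prime_gt0.
  move=> N e' op' HN; have [opA op1 _] := cyclic_sentence_monoid HN.
  have [h /(cyclic_generatorP h opA op1 p_pr k_gt0) genN] :=
    cyclic_sentence_generator pk_lt pk1_lt HN.
  exact: (cyclic_generator_isomorphic opA op1 (@gmulA _ G) (@gmul1 _ G) genN genG).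
- by rewrite fsize_cyclic_sentence //; lia.
Qed.
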